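(* Let $R$ be a lattice diagram of a knot or link. Then $R$ is the projection, under the orthogonal projection $\pi_{xy}\colon\mathbb{R}^3\to\mathbb{R}^2$ onto the $xy$-plane, of a proper lattice stick knot or link if and only if $R$ does not have a Celtic configuration.
   Context: The $\mathbb{Z}^3$ lattice is the graph in $\mathbb{R}^3$ whose vertices are the points with integer coordinates and whose edges are the unit-length segments parallel to the coordinate axes; the $\mathbb{Z}^2$ lattice is defined analogously in the plane. An $x$-edge, $y$-edge, $z$-edge is a lattice edge parallel to the corresponding axis. A $z$-stick is a segment that is a union of finitely many $z$-edges; a single lattice point is regarded as a trivial $z$-stick. A lattice stick knot or link is a knot or link contained in the $\mathbb{Z}^3$ lattice. It is proper if: the inverse image under $\pi_{xy}$ of any point of its projection that is not a vertex of the $\mathbb{Z}^2$ lattice is a single point; the inverse image of a vertex of the projection that is not a crossing is a single (possibly trivial) $z$-stick; and the inverse image of a vertex of the projection that is a crossing is two (possibly trivial) disjoint $z$-sticks, the over-strand at the crossing being the one whose $z$-stick lies higher. A lattice diagram of a knot or link is a knot or link diagram (a closed curve or curves in the plane with finitely many transverse double points, the crossings, each with over/under information) that is contained in the $\mathbb{Z}^2$ lattice and all of whose crossings are at vertices of the $\mathbb{Z}^2$ lattice. At a crossing $c$, the $x$-strand (resp. $y$-strand) is the union of the two $x$-edges (resp. $y$-edges) of $R$ having $c$ as an endpoint; $c$ is an $x$-crossing (resp. $y$-crossing) if the over-strand at $c$ is the $x$-strand (resp. $y$-strand); this is the crossing type of $c$. A Celtic configuration is a set of four crossings of $R$ located at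 the four vertices of a unit square of the $\mathbb{Z}^2$ lattice such that any two of them that are endpoints of a common side of the square have opposite crossing types (so diagonally opposite ones have the same type). *)

From mathcomp Require Import all_boot all_order all_algebra.
Set Implicit Arguments. Unset Strict Implicit. Unset Printing Implicit Defensive.
Import Order.TTheory GRing.Theory Num.Theory.
Local Open Scope ring_scope.

(* Z^3 lattice.  A point is (x, y, z).  An edge is given by its lower      *)
(* endpoint p and its direction d : 'I_3 (0 = x, 1 = y, 2 = z); it is the  *)
(* unit segment from p to p + e_d.                                         *)
Definition pt3 := (int * int * int)%type.
Definition edge3 := (pt3 * 'I_3)%type.

Definition src3 (e : edge3) : pt3 := e.1.
Definition tgt3 (e : edge3) : pt3 :=
  let: (x, y, z, d) := e in
  if val d == 0%N then (x + 1, y, z)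
  else if val d == 1%N then (x, y + 1, z) else (x, y, z + 1).

Definition incident3 (p : pt3) (e : edge3) : bool := (src3 e == p) || (tgt3 e == p).

Definition lattice_link (L : seq edge3) : Prop :=
  [/\ uniq L, L != [::] &
      forall p : pt3, count (incident3 p) L = 0%N \/ count (incident3 p) L = 2%N].

Definition on3 (L : seq edge3) (p : pt3) : bool := has (incident3 p) L.

Definition is_zedge (e : edge3) : bool := val e.2 == 2%N.
Definition horiz (e : edge3) : bool := ~~ is_zedge e.

(* Z^2 lattice. An edge is its lower endpoint and direction d : 'I_2       *)
(* (0 = x-edge, 1 = y-edge).                                               *)
Definition pt2 := (int * int)%type.
Definition edge2 := (pt2 * 'I_2)%type.

Definition tgt2 (e : edge2) : pt2 :=
  let: (x, y, d) := e in if val d == 0%N then (x + 1, y) else (x, y + 1).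

Definition incident2 (v : pt2) (e : edge2) : bool := (e.1 == v) || (tgt2 e == v).

Definition deg2 (R : seq edge2) (v : pt2) : nat := count (incident2 v) R.

(* A lattice diagram: its underlying curve is a nonempty finite union of   *)
(* Z^2 edges (each traversed once, since double points are finitely many)  *)
(* in which every vertex is passed 0 times (degree 0), once (degree 2),    *)
(* or is a transverse double point = crossing (degree 4; the curves then   *)
(* go straight through, the x-strand and the y-strand).  Crossing          *)
(* information is a function typ : pt2 -> bool, only relevant at           *)
(* crossings: typ c = true means c is an x-crossing (x-strand over),       *)
(* typ c = false means c is a y-crossing.                                  *)
Definition lattice_diagram (R : seq edge2) : Prop :=
  [/\ uniq R, R != [::] &
      forall v : pt2, [\/ deg2 R v = 0%N, deg2 R v = 2%N | deg2 R v = 4%N]].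

Definition crossing (R : seq edge2) (v : pt2) : bool := deg2 R v == 4%N.

Definition proj_edge (e : edge3) : edge2 :=
  let: (x, y, z, d) := e in ((x, y), inord (val d)).

Definition above (v : pt2) (z : int) : pt3 := (v.1, v.2, z).

Definition preimage_is_stick (L : seq edge3) (v : pt2) (a b : int) : Prop :=
  a <= b /\
  forall z : int,
    (on3 L (above v z) = (a <= z <= b)) /\
    (((above v z, ord_max : 'I_3) \in L) = (a <= z < b)).

Definition preimage_is_two_sticks (L : seq edge3) (v : pt2)
    (a1 b1 a2 b2 : int) : Prop :=
  [/\ a1 <= b1, b1 < a2, a2 <= b2 &
  forall z : int,
    (on3 L (above v z) = (a1 <= z <= b1) || (a2 <= z <= b2)) /\
    (((above v z, ord_max : 'I_3) \in L) = (a1 <= z < b1) || (a2 <= z < b2))].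

(* L is a proper lattice stick link whose projection pi_xy(L) is the       *)
(* lattice diagram (R, typ):                                                *)
(*  - the horizontal edges of L project bijectively onto the edges of R     *)
(*    (so pi_xy(L) = |R| and every non-vertex point of the projection has   *)
(*    a single preimage);                                                   *)
(*  - over a crossing c the preimage is two disjoint z-sticks; the lifts of *)
(*    the two x-edges of R at c are attached to one of them and the lifts   *)
(*    of the two y-edges to the other (so the strands of pi_xy(L) at c are  *)
(*    those of R), and the over-strand (the one on the higher stick) is the *)
(*    x-strand iff c is an x-crossing of R.                                 *)
Definition proper_projection (L : seq edge3) (R : seq edge2) (typ : pt2 -> bool)
    : Prop :=
  [/\ perm_eq [seq proj_edge e | e <- L & horiz e] R,
      (forall v : pt2, deg2 R v = 0%N -> forall z : int, ~~ on3 L (above v z)),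
      (forall v : pt2, deg2 R v = 2%N -> exists a b : int, preimage_is_stick L v a b) &
      (forall v : pt2, deg2 R v = 4%N ->
         exists a1 b1 a2 b2 : int,
           preimage_is_two_sticks L v a1 b1 a2 b2 /\
           forall e : edge3, e \in L -> horiz e -> forall z : int,
             incident3 (above v z) e ->
             let upper := a2 <= z <= b2 in
             let lower := a1 <= z <= b1 in
             if val e.2 == 0%N
             then (if typ v then upper else lower)
             else (if typ v then lower else upper))].

Definition celtic_configuration (R : seq edge2) (typ : pt2 -> bool) (v : pt2) : Prop :=
  let: (x, y) := v in
  [/\ [&& crossing R (x, y), crossing R (x + 1, y),
          crossing R (x, y + 1) & crossing R (x + 1, y + 1)],
      typ (x, y) != typ (x + 1, y), typ (x, y) != typ (x, y + 1),
      typ (x + 1, y + 1) != typ (x + 1, y) & typ (x + 1, y + 1) != typ (x, y + 1)].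

Definition has_celtic_configuration (R : seq edge2) (typ : pt2 -> bool) : Prop :=
  exists v : pt2, celtic_configuration R typ v.

(* Over a crossing of a proper stick link, the lifts of the two edges of the
   under-strand lie strictly below those of the over-strand. Around a Celtic
   configuration the lifts of the four sides of the square would therefore satisfy a
   cyclic chain of strict inequalities, which is impossible.

   Conversely, write e -> f when the edges e and f of R meet at a crossing at which f is
   the over-strand. Along a chain e0 -> e1 -> ... consecutive crossings are the two ends
   of the common edge, so the chain of crossings moves alternately in the x- and the
   y-direction; turning back would put four crossings of alternating types on a unit
   square, i.e. a Celtic configuration. Without one, every chain is a staircase whose
   edge midpoints strictly advance in a fixed diagonal direction, so -> is acyclic.
   Lift every edge e of R to the height h e = number of edges from which e can be reached,
   and join the lifts over each vertex by vertical sticks, one for each strand through it: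
   since h increases along ->, the two sticks over a crossing are disjoint and the
   over-strand's stick is the higher one. *)

From mathcomp Require Import all_boot all_order all_algebra zify.
Set Implicit Arguments. Unset Strict Implicit. Unset Printing Implicit Defensive.
Import Order.TTheory GRing.Theory Num.Theory.
Local Open Scope ring_scope.

Lemma ord2_cases (d : 'I_2) : d = ord0 \/ d = ord_max.
Proof. by case: d => [[|[|k]] Hk]; [left; apply: val_inj|right; apply: val_inj|]. Qed.

Definition west_edge (v : pt2) : edge2 := ((v.1 - 1, v.2), ord0).
Definition east_edge (v : pt2) : edge2 := (v, ord0).
Definition south_edge (v : pt2) : edge2 := ((v.1, v.2 - 1), ord_max).
Definition north_edge (v : pt2) : edge2 := (v, ord_max).

Definition star (v : pt2) : seq edge2 :=
  [:: west_edge v; east_edge v; south_edge v; north_edge v].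

Lemma incident2_star v e : incident2 v e = (e \in star v).
Proof.
case: v e => vx vy [[x y] d]; case: (ord2_cases d) => ->;
rewrite /incident2 /star /tgt2 /= !inE !xpair_eqE -!val_eqE /=; apply/idP/idP; lia.
Qed.

Lemma uniq_star v : uniq (star v).
Proof. by case: v => vx vy; rewrite /star /= !inE !xpair_eqE -!val_eqE /=; lia. Qed.

Lemma count_uniq_sub (T : eqType) (P : pred T) (s t : seq T) :
  uniq s -> uniq t -> {subset P <= mem t} ->
  count P s = count (predI P (mem s)) t.
Proof.
move=> us ut Pt; rewrite -!size_filter; apply: perm_size.
apply: uniq_perm; rewrite ?filter_uniq // => x; rewrite !mem_filter /=.
by case Px: (P x); rewrite ?(Pt x Px) ?andbT.
Qed.

Lemma deg2_star R v : uniq R -> deg2 R v = count (mem R) (star v).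
Proof.
move=> uR; rewrite /deg2 (count_uniq_sub uR (uniq_star v)).
  by apply: eq_in_count => e /= ev; rewrite incident2_star ev.
by move=> e ev; rewrite -incident2_star.
Qed.

Lemma crossing_star R v : uniq R -> crossing R v -> {subset star v <= R}.
Proof.
rewrite /crossing => uR /eqP; rewrite deg2_star // => deg4.
by apply/allP; rewrite all_count deg4.
Qed.

Section Necessity.

Variables (L : seq edge3) (R : seq edge2) (typ : pt2 -> bool).
Hypothesis projLR : proper_projection L R typ.

Lemma proper_projection_lift g : g \in R ->
  exists z e, [/\ e \in L, horiz e, incident3 (above g.1 z) e,
                  incident3 (above (tgt2 g) z) e & val e.2 = val g.2].
Proof.
case: projLR => permLR _ _ _ gR.
have : g \in [seq proj_edge e | e <- L & horiz e] by rewrite (perm_mem permLR).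
case/mapP => [[[[x y] z] d]]; rewrite mem_filter => /andP[hd eL] ->.
have d01 : val d = 0%N \/ val d = 1%N.
  by move: hd; rewrite /horiz /is_zedge /=; have := ltn_ord d; lia.
exists z, (x, y, z, d); rewrite /proj_edge /incident3 /above /tgt3 /tgt2 /= inordK;
  last by case: d01 => ->.
by case: d01 => -> /=; rewrite !eqxx ?orbT.
Qed.

Lemma proper_projection_crossing c z1 z2 e1 e2 : crossing R c ->
  e1 \in L -> horiz e1 -> incident3 (above c z1) e1 -> val e1.2 = 0%N ->
  e2 \in L -> horiz e2 -> incident3 (above c z2) e2 -> val e2.2 = 1%N ->
  if typ c then z2 < z1 else z1 < z2.
Proof.
case: projLR => _ _ _ two_sticks /eqP deg4 e1L h1 i1 x1 e2L h2 i2 y2.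
have [a1 [b1 [a2 [b2 [[_ sep _ _] strands]]]]] := two_sticks c deg4.
have := strands e1 e1L h1 z1 i1; have := strands e2 e2L h2 z2 i2.
rewrite /= x1 y2 /=; case: (typ c) => /andP[? ?] /andP[? ?]; lia.
Qed.

Lemma proper_projection_no_celtic : uniq R -> ~ has_celtic_configuration R typ.
Proof.
move=> uR [[x y] [/and4P[c00 c10 c01 c11] t1 t2 t3 t4]].
have gb : east_edge (x, y) \in R by apply: (crossing_star uR c00); rewrite !inE eqxx ?orbT.
have gl : north_edge (x, y) \in R by apply: (crossing_star uR c00); rewrite !inE eqxx ?orbT.
have gr : north_edge (x + 1, y) \in R by apply: (crossing_star uR c10); rewrite !inE eqxx ?orbT.
have gt : east_edge (x, y + 1) \in R by apply: (crossing_star uR c01); rewrite !inE eqxx ?orbT.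
have [zb [eb [ebL hb ib1 ib2 xb]]] := proper_projection_lift gb.
have [zl [el [elL hl il1 il2 yl]]] := proper_projection_lift gl.
have [zr [er [erL hr ir1 ir2 yr]]] := proper_projection_lift gr.
have [zt [et [etL ht it1 it2 xt]]] := proper_projection_lift gt.
have := proper_projection_crossing c00 ebL hb ib1 xb elL hl il1 yl.
have := proper_projection_crossing c10 ebL hb ib2 xb erL hr ir1 yr.
have := proper_projection_crossing c11 etL ht it2 xt erL hr ir2 yr.
have := proper_projection_crossing c01 etL ht it1 xt elL hl il2 yl.
move: t1 t2 t3 t4; clear; case: (typ (x, y)); case: (typ (x + 1, y)); case: (typ (x, y + 1));
  case: (typ (x + 1, y + 1)) => //= *; lia.
Qed.

End Necessity.

(** * Chains of under-crossings *)

Definition is_xedge (e : edge2) : bool := val e.2 == 0%N.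

(* The endpoint of [e] lying on [f] when [e] and [f] meet; junk otherwise. *)
Definition joint (e f : edge2) : pt2 := if incident2 e.1 f then e.1 else tgt2 e.

Definition crosses_under (R : seq edge2) (typ : pt2 -> bool) (e f : edge2) : bool :=
  [&& e \in R, f \in R, e.2 != f.2, incident2 (joint e f) f,
      crossing R (joint e f) & typ (joint e f) == is_xedge f].

Definition exit_sign (e f : edge2) : int := if f.1 == joint e f then 1 else -1.

Definition axis_coord (q : int * int) (f : edge2) : int := if is_xedge f then q.1 else q.2.

(* The scalar product of [q] with twice the midpoint of [f]. *)
Definition potential (q : int * int) (f : edge2) : int :=
  q.1 * (2 * f.1.1 + (if is_xedge f then 1 else 0)) +
  q.2 * (2 * f.1.2 + (if is_xedge f then 0 else 1)).

Definition unit_square (p q r s : pt2) : Prop :=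
  (p.2 = q.2 /\ r.2 = s.2 /\ p.1 = s.1 /\ q.1 = r.1 /\ (q.1 = p.1 + 1 \/ p.1 = q.1 + 1)
     /\ (r.2 = q.2 + 1 \/ q.2 = r.2 + 1)) \/
  (p.1 = q.1 /\ r.1 = s.1 /\ p.2 = s.2 /\ q.2 = r.2 /\ (q.2 = p.2 + 1 \/ p.2 = q.2 + 1)
     /\ (r.1 = q.1 + 1 \/ q.1 = r.1 + 1)).

Ltac case_incident2 := move=> /orP[/andP[/eqP ? /eqP ?]|/andP[/eqP ? /eqP ?]].

Lemma potential_step (b c : edge2) (c0 c1 : pt2) (q : int * int) :
  b.2 != c.2 -> incident2 c0 b -> incident2 c1 b -> c0 != c1 -> incident2 c1 c ->
  (if b.1 == c0 then 1 else -1) = axis_coord q b ->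
  (if c.1 == c1 then 1 else -1) = axis_coord q c ->
  potential q c = potential q b + 2.
Proof.
case: b c c0 c1 q => [[bx by'] bd] [[cx cy] cd] [p0x p0y] [p1x p1y] [q1 q2] /=.
case: (ord2_cases bd) => ->; case: (ord2_cases cd) => -> //= _;
rewrite /incident2 /tgt2 /axis_coord /potential /is_xedge /= !xpair_eqE;
case: ifP => h1; case: ifP => h2; move=> *; subst q1 q2; lia.
Qed.

Lemma uturn_square (b c d : edge2) (c0 c1 c2 c3 : pt2) :
  b.2 != c.2 -> c.2 != d.2 -> incident2 c0 b -> incident2 c1 b -> c0 != c1 ->
  incident2 c1 c -> incident2 c2 c -> c1 != c2 -> incident2 c2 d -> incident2 c3 d ->
  c2 != c3 -> (b.1 == c0) != (d.1 == c2) -> unit_square c0 c1 c2 c3.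
Proof.
case: b c d c0 c1 c2 c3 => [[bx by'] bd] [[cx cy] cd] [[dx dy] dd]
  [p0x p0y] [p1x p1y] [p2x p2y] [p3x p3y].
rewrite /unit_square /=.
case: (ord2_cases bd) => ->; case: (ord2_cases cd) => ->; case: (ord2_cases dd) => -> //= _ _;
rewrite /incident2 /tgt2 /= !xpair_eqE;
case_incident2; case_incident2 => H1; case_incident2; case_incident2 => H2;
case_incident2; case_incident2 => H3; subst; lia.
Qed.

Lemma celtic_of_corners R typ (p00 p10 p01 p11 : pt2) :
  p10 = (p00.1 + 1, p00.2) -> p01 = (p00.1, p00.2 + 1) -> p11 = (p00.1 + 1, p00.2 + 1) ->
  crossing R p00 -> crossing R p10 -> crossing R p01 -> crossing R p11 ->
  typ p00 != typ p10 -> typ p00 != typ p01 -> typ p11 != typ p10 -> typ p11 != typ p01 ->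
  has_celtic_configuration R typ.
Proof.
case: p00 => x y /= -> -> -> *.
by exists (x, y); split => //; apply/and4P.
Qed.

Lemma celtic_of_unit_square R typ (p q r s : pt2) : unit_square p q r s ->
  crossing R p -> crossing R q -> crossing R r -> crossing R s ->
  typ p != typ q -> typ q != typ r -> typ r != typ s -> typ s != typ p ->
  has_celtic_configuration R typ.
Proof.
case: p q r s => [px py] [qx qy] [rx ry] [sx sy] /=.
rewrite /unit_square /= => sq *.
case: sq => [[h1 [h2 [h3 [h4 [[h5|h5] [h6|h6]]]]]]|[h1 [h2 [h3 [h4 [[h5|h5] [h6|h6]]]]]]];
  [ apply: (@celtic_of_corners R typ (px, py) (qx, qy) (sx, sy) (rx, ry))
  | apply: (@celtic_of_corners R typ (sx, sy) (rx, ry) (px, py) (qx, qy))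
  | apply: (@celtic_of_corners R typ (qx, qy) (px, py) (rx, ry) (sx, sy))
  | apply: (@celtic_of_corners R typ (rx, ry) (sx, sy) (qx, qy) (px, py))
  | apply: (@celtic_of_corners R typ (px, py) (sx, sy) (qx, qy) (rx, ry))
  | apply: (@celtic_of_corners R typ (sx, sy) (px, py) (rx, ry) (qx, qy))
  | apply: (@celtic_of_corners R typ (qx, qy) (rx, ry) (px, py) (sx, sy))
  | apply: (@celtic_of_corners R typ (rx, ry) (qx, qy) (sx, sy) (px, py)) ];
  try by [|rewrite eq_sym].
all: congr pair; rewrite /=; clear -h1 h2 h3 h4 h5 h6; lia.
Qed.

Lemma ord2_neq_trans (i j k : 'I_2) : i != j -> j != k -> k = i.
Proof. by case: (ord2_cases i) (ord2_cases j) (ord2_cases k) => -> [] -> [] ->. Qed.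

Lemma is_xedge_perp (e f : edge2) : e.2 != f.2 -> is_xedge f = ~~ is_xedge e.
Proof. by case: e f => [? d] [? d']; case: (ord2_cases d) (ord2_cases d') => -> [] ->. Qed.

Lemma joint_incident e f : incident2 (joint e f) e.
Proof. by rewrite /joint /incident2; case: ifP => _; rewrite eqxx ?orbT. Qed.

Lemma perp_meet_unique (e f : edge2) v w : e.2 != f.2 ->
  incident2 v e -> incident2 v f -> incident2 w e -> incident2 w f -> v = w.
Proof.
case: e f v w => [[a b] d] [[a' b'] d'] [vx vy] [wx wy].
case: (ord2_cases d) (ord2_cases d') => -> [] -> //= _;
rewrite /incident2 /tgt2 /= !xpair_eqE;
case_incident2; case_incident2; case_incident2; case_incident2; subst; congr pair; lia.
Qed.

Lemma crosses_underI R typ v e f : e \in R -> f \in R -> e.2 != f.2 ->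
  incident2 v e -> incident2 v f -> crossing R v -> typ v = is_xedge f ->
  crosses_under R typ e f.
Proof.
move=> eR fR ef ve vf cv tv; rewrite /crosses_under.
have -> : joint e f = v.
  rewrite /joint; case: ifP => [ef1|].
    by apply: (perp_meet_unique ef) => //; rewrite /incident2 eqxx.
  case/orP: ve => /eqP // e1 e1f.
  by move: e1f; rewrite e1 vf.
by rewrite eR fR ef vf cv tv eqxx.
Qed.

Lemma closed_walk_chain (T : Type) (r : rel T) (x : T) (p : seq T) :
  path r x p -> last x p = x -> (0 < size p)%N ->
  forall n, r (nth x (x :: p) (n %% size p)) (nth x (x :: p) (n.+1 %% size p)).
Proof.
move=> /(pathP x) rp lp sp n.
have jp : (n %% size p < size p)%N by rewrite ltn_mod.
rewrite modnS; case: ifP => [dv|_]; last exact: rp.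
have wrap : (n %% size p).+1 = size p.
  apply/eqP; rewrite eqn_leq jp dvdn_leq //.
  by rewrite -(dvdn_addr _ (dvdn_mull (n %/ size p) (dvdnn (size p)))) addnS -divn_eq.
have := rp _ jp; congr r.
have -> : (n %% size p = (size p).-1)%N by rewrite -[in RHS]wrap.
by rewrite nth_last lp.
Qed.

Section UnderCrossingChains.

Variables (R : seq edge2) (typ : pt2 -> bool).
Local Notation under := (crosses_under R typ).

Lemma crosses_under_spec e f : under e f ->
  [/\ e.2 != f.2, incident2 (joint e f) f, crossing R (joint e f)
    & typ (joint e f) = is_xedge f].
Proof. by case/and3P => _ _ /and4P[-> -> -> /eqP ->]. Qed.

Lemma crosses_under_joint_neq a b c : under a b -> under b c -> joint a b != joint b c.
Proof.
move=> /crosses_under_spec[_ _ _ tab] /crosses_under_spec[bc _ _ tbc].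
by apply/eqP => E; move: tbc; rewrite -E tab (is_xedge_perp bc); case: (is_xedge b).
Qed.

Hypothesis no_celtic : ~ has_celtic_configuration R typ.

(* Reversing direction would close a unit square of crossings whose types alternate. *)
Lemma no_uturn a b c d e : under a b -> under b c -> under c d -> under d e ->
  exit_sign c d = exit_sign a b.
Proof.
move=> ab bc cd de.
have [j01 j12 j23] := And3 (crosses_under_joint_neq ab bc)
  (crosses_under_joint_neq bc cd) (crosses_under_joint_neq cd de).
move: ab bc cd de => /crosses_under_spec[_ ib cb tb] /crosses_under_spec[pbc ic cc tc]
  /crosses_under_spec[pcd id cd td] /crosses_under_spec[pde ie ce te].
have t01 : typ (joint a b) != typ (joint b c).
  by rewrite tb tc (is_xedge_perp pbc); case: (is_xedge b).
have t12 : typ (joint b c) != typ (joint c d).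
  by rewrite tc td (is_xedge_perp pcd); case: (is_xedge c).
have t23 : typ (joint c d) != typ (joint d e).
  by rewrite td te (is_xedge_perp pde); case: (is_xedge d).
have t30 : typ (joint d e) != typ (joint a b).
  rewrite te tb (is_xedge_perp pde) /is_xedge (ord2_neq_trans pbc pcd).
  by case: (val b.2 == 0%N).
have square := uturn_square pbc pcd ib (joint_incident b c) j01 ic (joint_incident c d) j12
  id (joint_incident d e) j23.
rewrite /exit_sign; case E: (b.1 == joint a b); case E': (d.1 == joint c d) => //;
  exfalso; apply: no_celtic;
  apply: (celtic_of_unit_square (square _) cb cc cd ce t01 t12 t23 t30);
  by rewrite E E'.
Qed.

(* By [no_uturn] the chain is a staircase in the diagonal direction [q]. *)
Lemma chain_potential (y : nat -> edge2) : (forall n, under (y n) (y n.+1)) ->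
  exists q, forall n, potential q (y n.+1) = potential q (y 1%N) + 2 * n%:Z.
Proof.
move=> chain.
pose q := if is_xedge (y 1%N) then (exit_sign (y 0%N) (y 1%N), exit_sign (y 1%N) (y 2%N))
          else (exit_sign (y 1%N) (y 2%N), exit_sign (y 0%N) (y 1%N)).
have signs n : exit_sign (y n) (y n.+1) = axis_coord q (y n.+1) /\
               exit_sign (y n.+1) (y n.+2) = axis_coord q (y n.+2).
  elim: n => [|n [IH1 IH2]].
    have /crosses_under_spec[p12 _ _ _] := chain 1%N.
    by rewrite /axis_coord /q (is_xedge_perp p12); case: (is_xedge (y 1%N)).
  split=> //; rewrite (no_uturn (chain n) (chain n.+1) (chain n.+2) (chain n.+3)) IH1.
  have /crosses_under_spec[p1 _ _ _] := chain n.+1.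
  have /crosses_under_spec[p2 _ _ _] := chain n.+2.
  by rewrite /axis_coord /is_xedge (ord2_neq_trans p1 p2).
exists q; elim=> [|n IH]; first by rewrite mulr0 addr0.
have [s1 s2] := signs n.
have /crosses_under_spec[_ i1 _ _] := chain n.
have /crosses_under_spec[p12 i2 _ _] := chain n.+1.
rewrite (potential_step p12 i1 (joint_incident _ _)
  (crosses_under_joint_neq (chain n) (chain n.+1)) i2 s1 s2) IH.
lia.
Qed.

Lemma crosses_under_acyclic e p : path under e p -> last e p = e -> p = [::].
Proof.
case: p => // f p walk closed; exfalso.
have [q pot] := chain_potential (closed_walk_chain walk closed (ltn0Sn _)).
by have := pot (size (f :: p)); rewrite -addn1 modnDl /=; lia.
Qed.

Lemma crosses_under_heights : uniq R -> exists h : edge2 -> int,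
  (forall e, 0 <= h e <= (size R)%:Z) /\ (forall e f, under e f -> h e < h f).
Proof.
move=> uR; pose T := seq_sub R.
pose rT : rel T := relpre val under.
pose hT (t : T) := #|[set u | connect rT u t]|.
pose h e := if insub e is Some t then (hT t)%:Z else 0.
have hT_mono a b : rT a b -> (hT a < hT b)%N.
  move=> ab; apply: proper_card; apply/properP; split.
    by apply/subsetP => u; rewrite !inE => ua; apply: connect_trans ua (connect1 ab).
  exists b; rewrite !inE ?connect0 //; apply/negP => /connectP[p ba_p lp].
  have walk : path rT a (b :: p) by rewrite /= ab.
  have := @crosses_under_acyclic (val a) (map val (b :: p)).
  by rewrite path_map last_map /= -lp => /(_ walk erefl).
exists h; split=> [e|e f ef].
  rewrite /h; case: insubP => [t _ _|_] //; rewrite lez_nat -(card_seq_sub uR).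
  exact: max_card.
have /and3P[eR fR _] := ef.
by rewrite /h (insubT (mem R) eR) (insubT (mem R) fR) ltz_nat; apply: hT_mono.
Qed.

End UnderCrossingChains.

(** * The stick link over a diagram *)

Definition span (p q : int) : int * int := (Num.min p q, Num.max p q).
Definition in_span (s : int * int) (z : int) : bool := s.1 <= z <= s.2.
Definition in_span_edge (s : int * int) (z : int) : bool := s.1 <= z < s.2.

(* Lifts ending at height [z] plus stick edges just above and below it: the degree of a
   vertex of the stick link. *)
Lemma span_degree (p q z : int) :
  ((p == z) + (q == z) + in_span_edge (span p q) z + in_span_edge (span p q) (z - 1)
   = 2 * in_span (span p q) z)%N.
Proof. rewrite /in_span_edge /in_span /=; lia. Qed.

Lemma nat_of_orb_disjoint (a b : bool) : ~~ (a && b) -> ((a || b) = a + b :> nat)%N.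
Proof. by case: a; case: b. Qed.

Lemma two_spans_degree (p q p' q' z : int) :
  Num.max p q < Num.min p' q' \/ Num.max p' q' < Num.min p q ->
  let s := span p q in let s' := span p' q' in
  ((p == z) + (q == z) + (p' == z) + (q' == z)
   + (in_span_edge s z || in_span_edge s' z)
   + (in_span_edge s (z - 1) || in_span_edge s' (z - 1))
   = 2 * (in_span s z || in_span s' z))%N.
Proof.
move=> sep s s'.
have disj z' : ~~ (in_span s z' && in_span s' z') by rewrite /in_span /=; lia.
have disj_edge z' : ~~ (in_span_edge s z' && in_span_edge s' z').
  by rewrite /in_span_edge /=; lia.
rewrite !nat_of_orb_disjoint // mulnDr -(span_degree p q z) -(span_degree p' q' z) -/s -/s'.
lia.
Qed.

Section StickLink.

Variables (R : seq edge2) (h : edge2 -> int) (N : nat).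
Hypothesis uR : uniq R.
Hypothesis degR : forall v, [\/ deg2 R v = 0%N, deg2 R v = 2%N | deg2 R v = 4%N].
Hypothesis h_bound : forall e, 0 <= h e <= N%:Z.

Definition lift_edge (e : edge2) : edge3 := ((e.1.1, e.1.2, h e), widen_ord (leqnSn 2) e.2).

Definition star_in (v : pt2) : seq edge2 := [seq e <- star v | e \in R].

Definition sticks (v : pt2) : seq (int * int) :=
  if crossing R v then
    [:: span (h (west_edge v)) (h (east_edge v)); span (h (south_edge v)) (h (north_edge v))]
  else if star_in v is [:: e; f] then [:: span (h e) (h f)] else [::].

Definition on_sticks (v : pt2) (z : int) : bool := has (in_span^~ z) (sticks v).
Definition on_stick_edges (v : pt2) (z : int) : bool := has (in_span_edge^~ z) (sticks v).

Definition vertices : seq pt2 := undup ([seq e.1 | e <- R] ++ [seq tgt2 e | e <- R]).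

Definition zedge (v : pt2) (z : int) : edge3 := (above v z, ord_max).

Definition stick_zedges : seq edge3 :=
  [seq zedge vz.1 vz.2 | vz <- [seq (v, z%:Z) | v <- vertices, z <- iota 0 N]
                       & on_stick_edges vz.1 vz.2].

Definition stick_link : seq edge3 := map lift_edge R ++ stick_zedges.

Lemma size_star_in v : size (star_in v) = deg2 R v.
Proof. by rewrite size_filter deg2_star. Qed.

Variant vertex_spec (v : pt2) : Prop :=
  | VertexCrossing of crossing R v & star_in v = star v
  | VertexPath e f of ~~ crossing R v & star_in v = [:: e; f]
  | VertexEmpty of ~~ crossing R v & star_in v = [::].

Lemma vertexP v : vertex_spec v.
Proof.
have := size_star_in v; case: (boolP (crossing R v)) => [cv _|ncv].
  by apply: VertexCrossing => //; apply/all_filterP/allP; apply: crossing_star.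
have [->|->|deg4] := degR v; last by rewrite /crossing deg4 in ncv.
  by case E: (star_in v) => // _; apply: VertexEmpty.
by case E: (star_in v) => [|e [|f []]] // _; apply: VertexPath E.
Qed.

Lemma mem_star_in v e : (e \in star_in v) = (e \in R) && incident2 v e.
Proof. by rewrite mem_filter incident2_star andbC. Qed.

Lemma mem_sticks v s : s \in sticks v ->
  exists e f, [/\ e \in R, incident2 v e, f \in R & s = span (h e) (h f)].
Proof.
rewrite /sticks; case: (vertexP v) => [cv _ | e f ncv Ev | ncv Ev]; rewrite ?(negbTE ncv).
- rewrite cv !inE => /orP[]/eqP ->.
    by exists (west_edge v), (east_edge v); rewrite !(crossing_star uR cv) ?incident2_star
      ?inE ?eqxx ?orbT.
  by exists (south_edge v), (north_edge v); rewrite !(crossing_star uR cv) ?incident2_star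
    ?inE ?eqxx ?orbT.
- have: e \in star_in v /\ f \in star_in v by rewrite Ev !inE !eqxx ?orbT.
  rewrite !mem_star_in Ev inE => -[/andP[eR ve] /andP[fR _]] /eqP ->.
  by exists e, f.
- by rewrite Ev.
Qed.

Lemma incident3_lift v z e : incident3 (above v z) (lift_edge e) = incident2 v e && (h e == z).
Proof.
case: v e => [x y] [[a b] d]; case: (ord2_cases d) => ->;
rewrite /incident3 /src3 /tgt3 /lift_edge /incident2 /tgt2 /= !xpair_eqE;
apply/idP/idP; lia.
Qed.

Lemma count_incident_lifts v z :
  count (incident3 (above v z)) (map lift_edge R) = count (fun e => h e == z) (star_in v).
Proof.
rewrite count_map count_filter (eq_count (incident3_lift v z)).
rewrite (count_uniq_sub uR (uniq_star v)); last by move=> e /andP[]; rewrite incident2_star.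
by apply: eq_in_count => e ev /=; rewrite incident2_star ev andbC.
Qed.

Lemma zedge_inj v v' z z' : zedge v z = zedge v' z' -> v = v' /\ z = z'.
Proof. by case: v v' => [x y] [x' y'] [-> -> ->]. Qed.

Lemma incident3_zedge v z w z' :
  incident3 (above v z) (zedge w z') =
  (zedge w z' == zedge v z) || (zedge w z' == zedge v (z - 1)).
Proof.
case: v w => [x y] [x' y'].
rewrite /zedge /incident3 /src3 /tgt3 /above /= !xpair_eqE !eqxx /= !andbT.
apply/idP/idP; lia.
Qed.

Lemma uniq_stick_zedges : uniq stick_zedges.
Proof.
rewrite map_inj_uniq; last by move=> [v z] [v' z'] /zedge_inj /= [-> ->].
apply/filter_uniq/allpairs_uniq; rewrite ?undup_uniq ?iota_uniq //.
by move=> [v z] [v' z'] _ _ /= [-> ->].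
Qed.

Lemma count_incident_zedges v z :
  count (incident3 (above v z)) stick_zedges =
  ((zedge v z \in stick_zedges) + (zedge v (z - 1) \in stick_zedges))%N.
Proof.
rewrite -!count_uniq_mem ?uniq_stick_zedges // -count_predUI.
rewrite [count (predI _ _) _](@eq_count _ _ pred0) ?count_pred0 ?addn0; last first.
  by move=> e /=; apply/negP => /andP[/eqP -> /eqP /zedge_inj []]; lia.
apply: eq_in_count => _ /mapP[[w z'] _ ->].
by rewrite incident3_zedge.
Qed.

Lemma on_stick_edges_bound v z : on_stick_edges v z -> v \in vertices /\ 0 <= z < N%:Z.
Proof.
case/hasP => s /mem_sticks[e [f [eR ve fR ->]]] zef; split.
  rewrite mem_undup mem_cat; case/orP: ve => /eqP <-; apply/orP; [left|right];
    exact: map_f.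
by move: zef (h_bound e) (h_bound f); rewrite /in_span_edge /=; lia.
Qed.

Lemma mem_stick_zedges v z : (zedge v z \in stick_zedges) = on_stick_edges v z.
Proof.
apply/mapP/idP => [[[w z']]|Ez].
  by rewrite mem_filter => /andP[Ez _] /zedge_inj [-> ->].
exists (v, z) => //; rewrite mem_filter Ez /=.
have [vV zN] := on_stick_edges_bound Ez.
apply/allpairsP; exists (v, `|z|%N) => /=; rewrite mem_iota add0n vV.
by split=> //; [lia | congr pair; lia].
Qed.

Variable typ : pt2 -> bool.
Hypothesis h_mono : forall e f, crosses_under R typ e f -> h e < h f.

Lemma crossing_sticks_separated v : crossing R v ->
  if typ v
  then Num.max (h (south_edge v)) (h (north_edge v))
       < Num.min (h (west_edge v)) (h (east_edge v))
  else Num.max (h (west_edge v)) (h (east_edge v))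
       < Num.min (h (south_edge v)) (h (north_edge v)).
Proof.
move=> cv.
have lt e f : e \in star v -> f \in star v -> e.2 != f.2 -> typ v = is_xedge f -> h e < h f.
  move=> ev fv ef tv; apply/h_mono/(@crosses_underI _ _ v) => //;
    by [apply: (crossing_star uR cv) | rewrite incident2_star].
have [sW sE sS sN] : [/\ west_edge v \in star v, east_edge v \in star v,
                        south_edge v \in star v & north_edge v \in star v].
  by rewrite !inE !eqxx ?orbT.
case tv: (typ v).
  have := lt _ _ sS sW isT tv; have := lt _ _ sS sE isT tv.
  have := lt _ _ sN sW isT tv; have := lt _ _ sN sE isT tv; lia.
have := lt _ _ sW sS isT tv; have := lt _ _ sW sN isT tv.
have := lt _ _ sE sS isT tv; have := lt _ _ sE sN isT tv; lia.
Qed.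

Lemma stick_link_degree v z :
  count (incident3 (above v z)) stick_link = (2 * on_sticks v z)%N.
Proof.
rewrite count_cat count_incident_lifts count_incident_zedges !mem_stick_zedges.
rewrite /on_sticks /on_stick_edges /sticks.
case: (vertexP v) => [cv -> | e f ncv -> | ncv ->]; rewrite ?(negbTE ncv) ?cv /= ?orbF.
- rewrite !addn0 !addnA; apply: two_spans_degree.
  by move: (crossing_sticks_separated cv); case: (typ v); [right|left].
- by rewrite addn0 addnA span_degree.
- by [].
Qed.

Lemma on3_stick_link v z : on3 stick_link (above v z) = on_sticks v z.
Proof. by rewrite /on3 has_count stick_link_degree; case: (on_sticks v z). Qed.

Lemma lift_edge_inj : injective lift_edge.
Proof. by move=> [[a b] d] [[a' b'] d'] [-> -> _ /val_inj ->]. Qed.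

Lemma horiz_lift_edge e : horiz (lift_edge e).
Proof. by rewrite /horiz /is_zedge /=; have := ltn_ord e.2; lia. Qed.

Lemma horiz_stick_link : [seq e <- stick_link | horiz e] = map lift_edge R.
Proof.
rewrite /stick_link filter_cat.
have -> : [seq e <- stick_zedges | horiz e] = [::].
  by rewrite -(filter_pred0 stick_zedges); apply: eq_in_filter => _ /mapP[vz _ ->].
rewrite cats0.
by apply/all_filterP/allP => _ /mapP[e _ ->]; apply: horiz_lift_edge.
Qed.

Lemma mem_stick_link_zedge v z : ((above v z, ord_max) \in stick_link) = on_stick_edges v z.
Proof.
rewrite -[(above v z, _)]/(zedge v z) mem_cat mem_stick_zedges orb_idl //.
by case/mapP => e _ E; move: (horiz_lift_edge e); rewrite -E.
Qed.

Lemma lattice_link_stick_link : R != [::] -> lattice_link stick_link.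
Proof.
move=> R0; split.
- rewrite cat_uniq uniq_stick_zedges (map_inj_uniq lift_edge_inj) uR andbT /=.
  apply/hasPn => _ /mapP[vz _ ->]; apply/mapP => -[e _ E].
  by move: (horiz_lift_edge e); rewrite -E.
- by move: R0; rewrite /stick_link; case: R.
- by move=> [[x y] z]; rewrite -[(x, y, z)]/(above (x, y) z) stick_link_degree;
    case: (on_sticks _ _); [right|left].
Qed.

Lemma proj_lift_edge e : proj_edge (lift_edge e) = e.
Proof. by case: e => [[a b] d]; rewrite /proj_edge /= inord_val. Qed.

Lemma stick_link_horiz e : e \in stick_link -> horiz e -> exists2 g, g \in R & e = lift_edge g.
Proof.
move=> eL he; have : e \in [seq e <- stick_link | horiz e] by rewrite mem_filter he.
by rewrite horiz_stick_link => /mapP.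
Qed.

Lemma crossing_strands v z e : crossing R v ->
  e \in stick_link -> horiz e -> incident3 (above v z) e ->
  if val e.2 == 0%N then in_span (span (h (west_edge v)) (h (east_edge v))) z
  else in_span (span (h (south_edge v)) (h (north_edge v))) z.
Proof.
move=> cv eL he; have [g gR ->] := stick_link_horiz eL he.
rewrite incident3_lift incident2_star !inE => /andP[/or4P[] /eqP -> /eqP <-];
  rewrite /in_span /=; lia.
Qed.

Lemma stick_link_one_stick v p q : sticks v = [:: span p q] ->
  preimage_is_stick stick_link v (Num.min p q) (Num.max p q).
Proof.
move=> sticksE; split=> [|z]; first lia.
by rewrite on3_stick_link mem_stick_link_zedge /on_sticks /on_stick_edges sticksE /= !orbF.
Qed.

Lemma stick_link_two_sticks v p q p' q' :
  sticks v =i [:: span p q; span p' q'] -> Num.max p q < Num.min p' q' ->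
  preimage_is_two_sticks stick_link v
    (Num.min p q) (Num.max p q) (Num.min p' q') (Num.max p' q').
Proof.
move=> sticksE sep; split=> [|||z]; [lia|exact: sep|lia|].
rewrite on3_stick_link mem_stick_link_zedge /on_sticks /on_stick_edges.
by rewrite !(eq_has_r sticksE) /= !orbF.
Qed.

Lemma proper_projection_stick_link : proper_projection stick_link R typ.
Proof.
split.
- by rewrite horiz_stick_link -map_comp (eq_map proj_lift_edge) map_id.
- move=> v deg0 z; rewrite on3_stick_link /on_sticks /sticks.
  case: (vertexP v) => [cv _ | e f _ Ev | ncv ->].
  + by rewrite /crossing deg0 in cv.
  + by have := size_star_in v; rewrite Ev deg0.
  + by rewrite (negbTE ncv).
- move=> v deg2; case: (vertexP v) => [cv _ | e f ncv Ev | _ Ev].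
  + by rewrite /crossing deg2 in cv.
  + by exists (Num.min (h e) (h f)), (Num.max (h e) (h f));
      apply: stick_link_one_stick; rewrite /sticks (negbTE ncv) Ev.
  + by have := size_star_in v; rewrite Ev deg2.
- move=> v deg4; have cv : crossing R v by rewrite /crossing deg4.
  have strand z e := @crossing_strands v z e cv.
  have sticksE : sticks v = [:: span (h (west_edge v)) (h (east_edge v));
                                span (h (south_edge v)) (h (north_edge v))].
    by rewrite /sticks cv.
  have := crossing_sticks_separated cv; case: (typ v) => sep.
  + exists (Num.min (h (south_edge v)) (h (north_edge v))),
      (Num.max (h (south_edge v)) (h (north_edge v))),
      (Num.min (h (west_edge v)) (h (east_edge v))),
      (Num.max (h (west_edge v)) (h (east_edge v))).
    split; last by move=> e eL he z /(strand z e eL he); case: (_ == _).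
    by apply: stick_link_two_sticks sep => s; rewrite sticksE !inE orbC.
  + exists (Num.min (h (west_edge v)) (h (east_edge v))),
      (Num.max (h (west_edge v)) (h (east_edge v))),
      (Num.min (h (south_edge v)) (h (north_edge v))),
      (Num.max (h (south_edge v)) (h (north_edge v))).
    split; last by move=> e eL he z /(strand z e eL he); case: (_ == _).
    by apply: stick_link_two_sticks sep => s; rewrite sticksE.
Qed.

End StickLink.

Unset Implicit Arguments.

Theorem theorem2p4 (R : seq edge2) (typ : pt2 -> bool) :
  lattice_diagram R ->
  ((exists L : seq edge3, lattice_link L /\ proper_projection L R typ) <->
   ~ has_celtic_configuration R typ).
Proof.
case=> uR R0 degR; split.
  by case=> L [_ projLR]; apply: proper_projection_no_celtic projLR uR.
move=> no_celtic; have [h [h_bound h_mono]] := crosses_under_heights no_celtic uR.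
exists (stick_link R h (size R)); split.
  exact (lattice_link_stick_link uR degR h_bound h_mono R0).
exact (proper_projection_stick_link uR degR h_bound h_mono).
Qed.
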